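(* Let $R$ be a commutative ring, $\mathscr{M}$ a $\mathcal{B}$-diagram of $R$-modules, $\overline{\sigma}$ a ray and $(M[i],\mu_i)$ the corresponding ray-representation. Then: (1) for every $i\in\mathbb{N}$, $\widetilde{\mu}_{\le i}M[i]\supseteq\widetilde{\mu}_{\le i+1}M[i+1]$ and $\widetilde{\mu}_{\le i}0\subseteq\widetilde{\mu}_{\le i+1}0$, and $\bigcup_{i\in\mathbb{N}}\widetilde{\mu}_{\le i}0\subseteq\bigcap_{i\in\mathbb{N}}\widetilde{\mu}_{\le i}M[i]$; (2) if $K=\{0\}\cup\{j:\sigma_j=-\}$ is finite, then $\bigcap_{i\in\mathbb{N}}\widetilde{\mu}_{\le i}M[i]=\widetilde{\mu}_{\le k}M[k]$ where $k=\max K$; (3) if $K=\{0\}\cup\{j:\sigma_j=+\}$ is finite, then $\bigcup_{i\in\mathbb{N}}\widetilde{\mu}_{\le i}0=\widetilde{\mu}_{\le k}0$ where $k=\max K$.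
   Context: The quiver $\mathcal{B}$: vertices are finite $0/1$-sequences including the empty sequence $\emptyset$; for each vertex $\sigma$ there are arrows $\Omega_\sigma\colon\sigma\to\sigma1$ and $\mho_\sigma\colon\sigma0\to\sigma$. A ray is a sequence $(\sigma^i)_{i\ge0}$ of vertices with $\sigma^0=\emptyset$ and $\sigma^i$ equal to $\sigma^{i-1}$ with one symbol appended; $\sigma_i=+$ if the symbol is $1$, $\sigma_i=-$ if $0$ ($i\ge1$). The ray-representation: $M[i]=\mathscr{M}(\sigma^i)$ and $\mu_i$ ($i\ge1$) the image of the arrow between $\sigma^{i-1}$ and $\sigma^i$, so $\mu_i\colon M[i]\to M[i-1]$ if $\sigma_i=-$ and $\mu_i\colon M[i-1]\to M[i]$ if $\sigma_i=+$. The relation $\widetilde{\mu}_i\subseteq M[i]\oplus M[i-1]$ is $\{(x,\mu_i(x)):x\in M[i]\}$ if $\sigma_i=-$ and $\{(\mu_i(y),y):y\in M[i-1]\}$ if $\sigma_i=+$. For $S\subseteq M[n]$, $\widetilde{\mu}_{\le n}S$ is the set of $m_0\in M[0]$ for which there exist $m_i\in M[i]$ ($1\le i\le n$) with $m_n\in S$ and $(m_i,m_{i-1})\in\widetilde{\mu}_i$ for $1\le i\le n$; $\widetilde{\mu}_{\le0}S=S$; $\widetilde{\mu}_{\le i}0$ means $\widetilde{\mu}_{\le i}\{0\}$. *)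

From HB Require Import structures.
From mathcomp Require Import all_boot all_order all_algebra.
Unset Printing Implicit Defensive.
Import GRing.Theory.
Local Open Scope ring_scope.

(* Vertices of the quiver B: finite 0/1-sequences, encoded as seq bool
   (true = 1, false = 0) in REVERSED order: the list [:: a_n; ...; a_1]
   represents the sequence a_1 a_2 ... a_n.  Hence appending a symbol c to
   the vertex s ("sigma c") is the list  c :: s. *)

Record Bdiagram (R : comPzRingType) := {
  Bmod : seq bool -> lmodType R;
  Omega : forall s : seq bool, {linear Bmod s -> Bmod (true :: s)};
  Mho : forall s : seq bool, {linear Bmod (false :: s) -> Bmod s}
}.
Arguments Bmod {R}.
Arguments Omega {R}.
Arguments Mho {R}.

(* A ray is given by its sequence of appended symbols b : nat -> bool,
   b i being the (i+1)-st symbol (so sigma_{i+1} = + iff b i = true).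
   ray_vertex b i is the vertex sigma^i (in the reversed encoding). *)
Fixpoint ray_vertex (b : nat -> bool) (i : nat) : seq bool :=
  match i with
  | 0 => [::]
  | i'.+1 => b i' :: ray_vertex b i'
  end.

Definition rayM (R : comPzRingType) (D : Bdiagram R) (b : nat -> bool) (i : nat)
  : lmodType R := Bmod D (ray_vertex b i).
Arguments rayM {R}.

(* The relation tilde-mu_{i+1} subset M[i+1] (+) M[i]:
   mu_rel D b i x y  <->  (x, y) \in tilde-mu_{i+1}. *)
Definition mu_rel (R : comPzRingType) (D : Bdiagram R) (b : nat -> bool) (i : nat)
  : rayM D b i.+1 -> rayM D b i -> Prop :=
  match b i as c return Bmod D (c :: ray_vertex b i) -> Bmod D (ray_vertex b i) -> Prop with
  | true => fun x y => x = Omega D (ray_vertex b i) y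
  | false => fun x y => Mho D (ray_vertex b i) x = y
  end.
Arguments mu_rel {R}.

Definition mu_le (R : comPzRingType) (D : Bdiagram R) (b : nat -> bool) (n : nat)
  (S : rayM D b n -> Prop) : rayM D b 0 -> Prop :=
  fun m0 => exists m : forall i : nat, rayM D b i,
    [/\ m 0%N = m0, S (m n) & forall i : nat, (i < n)%N -> mu_rel D b i (m i.+1) (m i)].
Arguments mu_le {R} D b n S _.

Definition fullM (R : comPzRingType) (D : Bdiagram R) (b : nat -> bool) (n : nat)
  : rayM D b n -> Prop := fun _ => True.
Definition zeroM (R : comPzRingType) (D : Bdiagram R) (b : nat -> bool) (n : nat)
  : rayM D b n -> Prop := fun x => x = 0.
Arguments fullM {R}.
Arguments zeroM {R}.

Definition Kminus (b : nat -> bool) (j : nat) : Prop :=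
  j = 0%N \/ (0 < j)%N /\ b j.-1 = false.
Definition Kplus (b : nat -> bool) (j : nat) : Prop :=
  j = 0%N \/ (0 < j)%N /\ b j.-1 = true.

Definition nat_finite (K : nat -> Prop) : Prop :=
  exists N : nat, forall j, K j -> (j <= N)%N.

(* At a
   [+] step every element of M[i] has a preimage under the relation (take its
   image under Omega), so chains ending anywhere extend by one step; at a [-]
   step the relation is the graph of Mho, so a chain whose top is 0 is 0 one
   step lower.  Since 0 is related to 0 at every step, chains ending in 0
   always extend by zeros.  Past the last [-] (resp. [+]) step the chains of
   (2) (resp. (3)) can thus be prolonged (resp. cut back) without changing
   their bottom element. *)

From mathcomp Require Import all_boot all_order all_algebra.
From mathcomp Require Import zify.
Import GRing.Theory.
Local Open Scope ring_scope.

Section DependentUpdate.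
Variable T : nat -> Type.

Definition dupdate (f : forall i, T i) (n : nat) (x : T n) : forall i, T i :=
  fun i => match decP (n =P i) with
           | left e => eq_rect n T x i e
           | right _ => f i
           end.

Lemma dupdate_eq f n x : dupdate f n x n = x.
Proof. by rewrite /dupdate; case: decP => // e; rewrite (eq_irrelevance e erefl). Qed.

Lemma dupdate_neq f n x i : n <> i -> dupdate f n x i = f i.
Proof. by rewrite /dupdate; case: decP. Qed.

End DependentUpdate.
Arguments dupdate {T} f n x i.

Section RayChains.
Context {R : comPzRingType} {D : Bdiagram R} {b : nat -> bool}.

Lemma mu_rel00 j : mu_rel D b j 0 0.
Proof. by rewrite /mu_rel /rayM /=; case: (b j); rewrite linear0. Qed.

Lemma mu_rel_plus_surj j (y : rayM D b j) : b j = true -> exists x, mu_rel D b j x y.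
Proof.
move: y; rewrite /mu_rel /rayM /=; case: (b j) => // y _.
by exists (Omega D (ray_vertex b j) y).
Qed.
Arguments mu_rel_plus_surj {j}.

Lemma mu_rel_minus_0 j (x : rayM D b j.+1) (y : rayM D b j) :
  b j = false -> mu_rel D b j x y -> x = 0 -> y = 0.
Proof.
by move: x y; rewrite /mu_rel /rayM /=; case: (b j) => // x y _ <- ->; rewrite linear0.
Qed.
Arguments mu_rel_minus_0 {j x y}.

Lemma mu_le_restrict n j (S : rayM D b n -> Prop) x :
  (j <= n)%N -> mu_le D b n S x -> mu_le D b j (fullM D b j) x.
Proof. by move=> le_jn [m [m0 _ rel]]; exists m; split=> // i lt_ij; apply: rel; lia. Qed.

Lemma mu_leS n (S : rayM D b n -> Prop) (S' : rayM D b n.+1 -> Prop) x :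
  (forall y, S y -> exists2 z, S' z & mu_rel D b n z y) ->
  mu_le D b n S x -> mu_le D b n.+1 S' x.
Proof.
move=> ext [m [m0 Sm rel]]; have [z S'z rz] := ext _ Sm.
exists (dupdate m n.+1 z); split; first by rewrite dupdate_neq.
  by rewrite dupdate_eq.
move=> i; rewrite ltnS leq_eqVlt => /orP[/eqP -> | lt_in].
  by rewrite dupdate_eq dupdate_neq //; lia.
by rewrite !dupdate_neq; [apply: rel | lia | lia].
Qed.

Lemma mu_le_extend (P : forall i, rayM D b i -> Prop) n j x :
  (n <= j)%N ->
  (forall i, (n <= i < j)%N -> forall y, P i y -> exists2 z, P i.+1 z & mu_rel D b i z y) ->
  mu_le D b n (P n) x -> mu_le D b j (P j) x.
Proof.
elim: j => [|j IHj]; first by rewrite leqn0 => /eqP <-.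
rewrite leq_eqVlt ltnS => /orP[/eqP <- // | le_nj] ext h.
have ext_j : forall i, (n <= i < j)%N ->
    forall y, P i y -> exists2 z, P i.+1 z & mu_rel D b i z y.
  by move=> i /andP[le_ni lt_ij]; apply: ext; rewrite le_ni ltnW.
by apply: mu_leS (IHj le_nj ext_j h); apply: ext; rewrite le_nj ltnSn.
Qed.

Lemma mu_le_zero_mono n j x :
  (n <= j)%N -> mu_le D b n (zeroM D b n) x -> mu_le D b j (zeroM D b j) x.
Proof.
move=> le_nj; apply: (mu_le_extend (zeroM D b)) => // i _ y ->.
by exists 0 => //; apply: mu_rel00.
Qed.

Lemma mu_le_full_plus_tail k i x :
  (forall j, (k <= j)%N -> b j = true) -> (k <= i)%N ->
  mu_le D b k (fullM D b k) x -> mu_le D b i (fullM D b i) x.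
Proof.
move=> plus le_ki; apply: (mu_le_extend (fullM D b)) => // j /andP[le_kj _] y _.
by have [z rz] := mu_rel_plus_surj y (plus j le_kj); exists z.
Qed.

Lemma chain_minus_tail_0 k i (m : forall j, rayM D b j) :
  (forall j, (k <= j)%N -> b j = false) -> (k <= i)%N ->
  (forall j, (j < i)%N -> mu_rel D b j (m j.+1) (m j)) -> m i = 0 -> m k = 0.
Proof.
move=> minus; elim: i => [|i IHi]; first by rewrite leqn0 => /eqP ->.
rewrite leq_eqVlt => /orP[/eqP -> // | lt_ki] rel mi0.
apply: IHi lt_ki _ (mu_rel_minus_0 (minus i lt_ki) (rel i (ltnSn i)) mi0).
by move=> j lt_ji; apply: rel; lia.
Qed.

Lemma mu_le_zero_minus_tail k i x :
  (forall j, (k <= j)%N -> b j = false) -> (k <= i)%N ->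
  mu_le D b i (zeroM D b i) x -> mu_le D b k (zeroM D b k) x.
Proof.
move=> minus le_ki [m [m0 mi0 rel]]; exists m; split=> //.
  exact: chain_minus_tail_0 minus le_ki rel mi0.
by move=> j lt_jk; apply: rel; lia.
Qed.

Lemma Kminus_max_tail k :
  (forall j, Kminus b j -> (j <= k)%N) -> forall j, (k <= j)%N -> b j = true.
Proof.
move=> kmax j le_kj; case E: (b j) => //.
by have := kmax j.+1 (or_intror (conj isT E)); lia.
Qed.

Lemma Kplus_max_tail k :
  (forall j, Kplus b j -> (j <= k)%N) -> forall j, (k <= j)%N -> b j = false.
Proof.
move=> kmax j le_kj; case E: (b j) => //.
by have := kmax j.+1 (or_intror (conj isT E)); lia.
Qed.

End RayChains.
Arguments mu_le_restrict {R D b n j S x}.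
Arguments mu_le_zero_mono {R D b n j x}.
Arguments mu_le_full_plus_tail {R D b k i x}.
Arguments mu_le_zero_minus_tail {R D b k i x}.
Arguments Kminus_max_tail {b k}.
Arguments Kplus_max_tail {b k}.

Theorem lemma5p11 (R : comPzRingType) (D : Bdiagram R) (b : nat -> bool) :
  (* (1) *)
  ((forall (i : nat) (x : rayM D b 0),
      mu_le D b i.+1 (fullM D b i.+1) x -> mu_le D b i (fullM D b i) x) /\
   (forall (i : nat) (x : rayM D b 0),
      mu_le D b i (zeroM D b i) x -> mu_le D b i.+1 (zeroM D b i.+1) x) /\
   (forall x : rayM D b 0,
      (exists i : nat, mu_le D b i (zeroM D b i) x) ->
      forall i : nat, mu_le D b i (fullM D b i) x)) /\
  (* (2) *)
  (nat_finite (Kminus b) ->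
   forall k : nat, Kminus b k -> (forall j, Kminus b j -> (j <= k)%N) ->
   forall x : rayM D b 0,
     (forall i : nat, mu_le D b i (fullM D b i) x) <-> mu_le D b k (fullM D b k) x) /\
  (* (3) *)
  (nat_finite (Kplus b) ->
   forall k : nat, Kplus b k -> (forall j, Kplus b j -> (j <= k)%N) ->
   forall x : rayM D b 0,
     (exists i : nat, mu_le D b i (zeroM D b i) x) <-> mu_le D b k (zeroM D b k) x).
Proof.
split; [split; [|split]|split].
- by move=> i x; apply: mu_le_restrict.
- by move=> i x; apply: mu_le_zero_mono.
- move=> x [n h] i; have /mu_le_restrict := mu_le_zero_mono (leq_maxl n i) h.
  by apply; rewrite leq_maxr.
(* The maximum [k] already bounds [K]. *)
- move=> _ k _ kmax x; split=> [h | h i]; first exact: h.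
  have /mu_le_restrict := mu_le_full_plus_tail (Kminus_max_tail kmax) (leq_maxl k i) h.
  by apply; rewrite leq_maxr.
- move=> _ k _ kmax x; split=> [[i h] | h]; last by exists k.
  have h' := mu_le_zero_mono (leq_maxl i k) h.
  exact: mu_le_zero_minus_tail (Kplus_max_tail kmax) (leq_maxr i k) h'.
Qed.
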